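(* Let $X$ be a compact Hausdorff space, $(E,X,\pi)$ a bundle of complete metric spaces bounded by $k$, $U\subseteq X$ open, and $a:U\to E$ a continuous map with $\pi\circ a=\mathrm{id}_U$. Let $x\in U$ and let $\mu$ be an ultrafilter on $X$ converging to $x$. Then $\sigma_\mu(a(x))$ is the class of $(a(y))_{y\in U}$ in $\int_XE_y\,d\mu$.
   Context: Metric ultraproduct: $\int_XE_y\,d\mu=\prod E_y/\{\lim_\mu d(a_y,b_y)=0\}$ with metric $\lim_\mu d(a_y,b_y)$; a class may be given by a family defined on a set belonging to $\mu$ (here $U\in\mu$). Bundle of complete metric spaces bounded by $k$ over $X$: surjection $\pi:E\to X$ with each fibre $E_x$ a complete metric space with distances $\le k$ such that the global distance on $E\times_XE$ (subspace of $E\times E$) is upper semicontinuous, $\pi$ is continuous and open, and for every open $W$ and $f\in W$ there exist an open neighbourhood $V$ of $f$ and $\epsilon>0$ with $V\subseteq V_\epsilon\subseteq W$, where $V_\epsilon=\{g:\exists h\in V,\pi g=\pi h,d(g,h)<\epsilon\}$. $\sigma_\mu:E_x\to\int_XE_y\,d\mu$ is defined as follows: for an open neighbourhood $W$ of $f\in E_x$ let $A_W=\{(b_y)_{y\in X}:\exists U'\in\mu,\exists\epsilon>0,\ \coprod_{y\in U'}B(b_y,\epsilon)\subseteq W\}$; the filter generated by the $A_W$ is Cauchy and $\sigma_\mu(f)$ is its limit. *)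

From HB Require Import structures.
From mathcomp Require Import all_boot all_order all_algebra.
From mathcomp Require Import all_classical all_reals all_analysis.
From Stdlib Require Import ClassicalEpsilon.

Set Implicit Arguments.
Unset Strict Implicit.
Unset Printing Implicit Defensive.

Import Order.TTheory GRing.Theory Num.Theory.
Import numFieldNormedType.Exports.
Local Open Scope classical_set_scope.
Local Open Scope ring_scope.

Section Bundle.
Variables (R : realType) (X E : topologicalType) (pi : E -> X) (d : E -> E -> R).

(* The global distance d is only meaningful on E x_X E = {(g,h) | pi g = pi h}. *)

Definition fibres_metric_bounded (k : R) : Prop :=
  forall g h l : E, pi g = pi h -> pi h = pi l ->
    [/\ 0 <= d g h, d g h = 0 <-> g = h, d g h = d h g,
        d g l <= d g h + d h l & d g h <= k].

Definition fibres_complete : Prop :=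
  forall (x : X) (u : nat -> E), (forall n, pi (u n) = x) ->
    (forall e : R, 0 < e -> exists N, forall m n, (N <= m)%N -> (N <= n)%N ->
        d (u m) (u n) < e) ->
    exists l : E, pi l = x /\
      (forall e : R, 0 < e -> exists N, forall n, (N <= n)%N -> d (u n) l < e).

Definition dist_usc : Prop :=
  forall g h : E, pi g = pi h -> forall r : R, d g h < r ->
    \forall p \near (g, h), pi p.1 = pi p.2 -> d p.1 p.2 < r.

Definition Veps (V : set E) (eps : R) : set E :=
  [set g | exists h, V h /\ pi g = pi h /\ d g h < eps].

Definition Veps_condition : Prop :=
  forall (W : set E) (f : E), open W -> W f ->
    exists V : set E, exists eps : R,
      [/\ open V, V f, 0 < eps, V `<=` Veps V eps & Veps V eps `<=` W].

Definition is_bundle (k : R) : Prop :=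
  [/\ (forall x : X, exists g : E, pi g = x),
      fibres_metric_bounded k,
      fibres_complete & dist_usc] /\
  [/\ continuous pi,
      (forall A : set E, open A -> open (pi @` A))
    & Veps_condition].

Variable mu : set_system X.

(* a representative of a class of the ultraproduct: a family b_y in E_y
   defined on a set belonging to mu (values elsewhere are irrelevant) *)
Definition ufam (b : X -> E) : Prop := mu [set y | pi (b y) = y].

Definition udist (b c : X -> E) : R := lim ((fun y => d (b y) (c y)) @ mu).

Definition coprod_ball (b : X -> E) (U' : set X) (eps : R) : set E :=
  [set g | U' (pi g) /\ d g (b (pi g)) < eps].

Definition A_W (W : set E) : set (X -> E) :=
  [set b | ufam b /\ exists U' : set X, exists eps : R,
      [/\ mu U', (forall y, U' y -> pi (b y) = y), 0 < eps &
          coprod_ball b U' eps `<=` W]].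

(* the filter (on the ultraproduct) generated by the A_W, W open nbhd of f;
   the A_W form a filter base since A_(W1 `&` W2) `<=` A_W1 `&` A_W2 *)
Definition sigma_filter (f : E) : set (set (X -> E)) :=
  [set P | exists W : set E, [/\ open W, W f & A_W W `<=` P]].

(* c is a limit of that filter in the ultraproduct (pseudo)metric *)
Definition sigma_limit (f : E) (c : X -> E) : Prop :=
  ufam c /\ forall e : R, 0 < e ->
    sigma_filter f [set b | ufam b /\ udist b c < e].

Definition sigma_mu (f : E) : X -> E :=
  epsilon (inhabits (fun _ : X => f)) (sigma_limit f).

End Bundle.

From HB Require Import structures.
From mathcomp Require Import all_boot all_order all_algebra.
From mathcomp Require Import all_classical all_reals all_analysis.
From Stdlib Require Import ClassicalEpsilon.

Set Implicit Arguments.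
Unset Strict Implicit.
Unset Printing Implicit Defensive.

Import Order.TTheory GRing.Theory Num.Theory.
Import numFieldNormedType.Exports.
Local Open Scope classical_set_scope.
Local Open Scope ring_scope.

(** The family (a(y))_y is itself a limit of the filter defining sigma_mu(a(x)):
    by upper semicontinuity of d and continuity of a, the tubes
    {g | d(g, a(pi g)) < e} around the section are open neighbourhoods W of
    a(x), and any family in A_W is within e of a on a mu-large set.  Conversely,
    the Veps condition and mu --> x put a in every A_W, so a is within every
    e > 0 of the chosen limit sigma_mu(a(x)): their ultraproduct distance is 0. *)

Lemma ultra_fmap (T U : Type) (F : set_system T) (f : T -> U) :
  UltraFilter F -> UltraFilter (f @ F).
Proof.
move=> FU; split; first exact: fmap_proper_filter.
move=> G PG sFG; apply/seteqP; split; last exact: sFG.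
move=> P GP; case: (in_ultra_setVsetC (f @^-1` P) FU) => // nP.
have GnP : G (~` P) by apply: sFG.
have : G (P `&` ~` P) by apply: filterI.
by rewrite setICr => /filter_ex [].
Qed.

Lemma ultra_cvg_bounded (R : realType) (T : Type) (F : set_system T)
    (f : T -> R) (r : R) :
  UltraFilter F -> (\forall t \near F, 0 <= f t <= r) ->
  f @ F --> lim (f @ F) /\ 0 <= lim (f @ F) <= r.
Proof.
move=> FU f_bounded.
have := @segment_compact R 0 r; rewrite compact_ultra => /(_ _ (ultra_fmap f FU)).
case=> [|l [/= l_itv f_cvg]].
  by apply: filterS f_bounded => t; rewrite /= in_itv.
by rewrite (cvg_lim _ f_cvg) //; move: l_itv; rewrite in_itv.
Qed.

Section MetricUltraproduct.
Variables (R : realType) (X E : topologicalType) (pi : E -> X) (d : E -> E -> R).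
Variables (k : R) (mu : set_system X).
Hypothesis d_metric : fibres_metric_bounded pi d k.
Hypothesis mu_ultra : UltraFilter mu.
#[local] Instance mu_proper : ProperFilter mu := ultra_proper.

Lemma udist_cvg_bounded (b c : X -> E) : ufam pi mu b -> ufam pi mu c ->
  (fun y => d (b y) (c y)) @ mu --> udist d mu b c /\ 0 <= udist d mu b c <= k.
Proof.
move=> ub uc; apply: ultra_cvg_bounded.
apply: filterS (filterI ub uc) => y [/= piby picy].
have fibre_bc : pi (b y) = pi (c y) by rewrite piby picy.
by have [-> _ _ _ ->] := d_metric fibre_bc (erefl (pi (c y))).
Qed.

Lemma udistC (b c : X -> E) : ufam pi mu b -> ufam pi mu c ->
  udist d mu b c = udist d mu c b.
Proof.
move=> ub uc; apply/esym/cvg_lim => //.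
have d_sym : \forall y \near mu, d (b y) (c y) = d (c y) (b y).
  apply: filterS (filterI ub uc) => y [/= piby picy].
  have fibre_bc : pi (b y) = pi (c y) by rewrite piby picy.
  by have [_ _ -> _ _] := d_metric fibre_bc (erefl (pi (c y))).
exact: cvg_trans (near_eq_cvg d_sym) (udist_cvg_bounded ub uc).1.
Qed.

Lemma udist_eq0 (b c : X -> E) : ufam pi mu b -> ufam pi mu c ->
  (forall e : R, 0 < e -> udist d mu b c < e) -> udist d mu b c = 0.
Proof.
move=> ub uc small; have [_ /andP [udist_ge0 _]] := udist_cvg_bounded ub uc.
apply/eqP; rewrite eq_le udist_ge0 andbT leNgt; apply/negP => udist_gt0.
by have := small _ udist_gt0; rewrite ltxx.
Qed.

Lemma sigma_limit_sigma_mu (f : E) (c : X -> E) :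
  sigma_limit pi d mu f c -> sigma_limit pi d mu f (sigma_mu pi d mu f).
Proof. by move=> lim_c; apply: epsilon_spec; exists c. Qed.

Lemma sigma_limit_udist0 (f : E) (b c : X -> E) : sigma_limit pi d mu f c ->
  (forall W, open W -> W f -> A_W pi d mu W b) -> udist d mu b c = 0.
Proof.
move=> [uc lim_c] b_in_A_W; have [ub _] := b_in_A_W _ openT I.
apply: udist_eq0 => // e e0; have [W [oW Wf sub]] := lim_c e e0.
exact: (sub b (b_in_A_W W oW Wf)).2.
Qed.

Variables (U : set X) (a : X -> E).
Hypothesis a_cont : forall y, U y -> {for y, continuous a}.
Hypothesis a_section : forall y, U y -> pi (a y) = y.
Hypothesis U_open : open U.

Lemma ufam_section : mu U -> ufam pi mu a.
Proof. by move=> mU; apply: filterS mU => y /a_section. Qed.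

Lemma open_section_tube (r : R) : continuous pi -> dist_usc pi d ->
  open [set g | U (pi g) /\ d g (a (pi g)) < r].
Proof.
move=> pi_cont d_usc; rewrite openE => g [Ug dg].
have fibre_g : pi g = pi (a (pi g)) by rewrite a_section.
have to_section : (fun h => (h, a (pi h))) @ g --> (g, a (pi g)).
  apply: cvg_pair; first exact: cvg_id.
  exact: cvg_comp (pi_cont g) (a_cont Ug).
have near_usc : \forall h \near g,
    pi h = pi (a (pi h)) -> d h (a (pi h)) < r.
  exact: to_section _ (d_usc _ _ fibre_g _ dg).
have near_U : nbhs g (pi @^-1` U) by apply: pi_cont; exact: open_nbhs_nbhs.
apply: filterS (filterI near_usc near_U) => h /= [dh Uh]; split => //.
by apply: dh; rewrite /= a_section.
Qed.

Lemma section_sigma_limit (x : X) : continuous pi -> dist_usc pi d ->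
  U x -> mu U -> sigma_limit pi d mu (a x) a.
Proof.
move=> pi_cont d_usc Ux mU; split; first exact: ufam_section.
move=> e e0; exists [set g | U (pi g) /\ d g (a (pi g)) < e / 2]; split.
- exact: open_section_tube.
- split; rewrite a_section //.
  have [_ [_ d_aa] _ _ _] := d_metric (erefl (pi (a x))) (erefl (pi (a x))).
  by rewrite d_aa // divr_gt0.
move=> b [ub [U' [eps [mU' b_section eps0 ball_sub]]]]; split => //.
have near_b : \forall y \near mu, 0 <= d (b y) (a y) <= e / 2.
  apply: filterS (filterI mU mU') => y [Uy U'y].
  have piby := b_section y U'y.
  have fibre_ba : pi (b y) = pi (a y) by rewrite piby a_section.
  have [d_ge0 _ _ _ _] := d_metric fibre_ba (erefl (pi (a y))).
  have [_ [_ d_bb] _ _ _] := d_metric (erefl (pi (b y))) fibre_ba.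
  have /ball_sub[_] : coprod_ball pi d b U' eps (b y).
    by rewrite /coprod_ball /= piby d_bb.
  by rewrite piby d_ge0 => /ltW.
have [_ /andP [_ udist_le]] := ultra_cvg_bounded mu_ultra near_b.
apply: le_lt_trans udist_le _.
by rewrite ltr_pdivrMr // ltr_pMr // ltr1n.
Qed.

Lemma section_A_W (x : X) (W : set E) : Veps_condition pi d ->
  U x -> mu --> x -> open W -> W (a x) -> A_W pi d mu W a.
Proof.
move=> Veps_cond Ux mux oW Wax.
have [V [eps [oV Vax eps0 _ VW]]] := Veps_cond W (a x) oW Wax.
have mU : mu U by apply: mux; exact: open_nbhs_nbhs.
split; first exact: ufam_section.
exists (U `&` a @^-1` V), eps; split => //.
- by apply: filterI => //; apply: mux; apply: (a_cont Ux); exact: open_nbhs_nbhs.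
- by move=> y [/a_section].
move=> g [[Ug Vg] dg]; apply: VW; exists (a (pi g)).
by rewrite a_section.
Qed.

End MetricUltraproduct.

Theorem mainTheorem7 (R : realType) (X E : topologicalType) (pi : E -> X)
    (d : E -> E -> R) (k : R) :
  compact [set: X] -> hausdorff_space X ->
  is_bundle pi d k ->
  forall (U : set X) (a : X -> E),
    open U ->
    (forall y, U y -> {for y, continuous a}) ->
    (forall y, U y -> pi (a y) = y) ->
  forall (x : X) (mu : set_system X),
    U x -> UltraFilter mu -> mu --> x ->
    ufam pi mu (sigma_mu pi d mu (a x)) /\
    udist d mu (sigma_mu pi d mu (a x)) a = 0.
Proof.
move=> _ _ [[_ d_metric _ d_usc] [pi_cont _ Veps_cond]] U a oU a_cont a_section
  x mu Ux mu_ultra mux.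
have mU : mu U by apply: mux; exact: open_nbhs_nbhs.
have lim_a := section_sigma_limit d_metric mu_ultra a_cont a_section oU pi_cont
  d_usc Ux mU.
have lim_sigma := sigma_limit_sigma_mu lim_a.
have [u_sigma _] := lim_sigma.
split => //; rewrite (udistC d_metric mu_ultra u_sigma
  (ufam_section mu_ultra a_section mU)).
apply: (sigma_limit_udist0 d_metric mu_ultra lim_sigma) => W oW Wax.
exact: (section_A_W mu_ultra a_cont a_section oU Veps_cond Ux mux oW Wax).
Qed.
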